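(* Let $1\le p\le2$, $\frac1r=\frac1p-\frac12$ (with $r=\infty$ if $p=2$, the $\ell_r$-sums then read as maxima), and $d,N\in\mathbb{N}$ with $d\le N$. (i) For every real $\xi=(\xi_S)_{S\subset[N]}$, \[ \frac1{\sqrt{1+N\log2}}\Big(\sum_{S\subset[N]}|\xi_S|^r\Big)^{1/r}\le2\sqrt2\,e^2\,\|M_\xi\colon\mathcal{B}_N\to\ell_p(\{S:S\subset[N]\})\|. \] (ii) For every real $\xi=(\xi_S)_{S\subset[N],|S|\le d}$, \[ \frac1{\sqrt{1+N\log(1+20d)}}\Big(\sum_{S\subset[N],|S|\le d}|\xi_S|^r\Big)^{1/r}\le2\sqrt2\,e^2(1+\sqrt2)^d\,\|M_\xi\colon\mathcal{B}_N^{\le d}\to\ell_p(\{S\subset[N]:|S|\le d\})\|, \] and for every real $\xi=(\xi_S)_{S\subset[N],|S|=d}$, \[ \frac1{\sqrt{1+N\log(1+20d)}}\Big(\sum_{S\subset[N],|S|=d}|\xi_S|^r\Big)^{1/r}\le2\sqrt2\,e^2\,2^{d-1}\,\|M_\xi\colon\mathcal{B}_N^{=d}\to\ell_p(\{S\subset[N]:|S|=d\})\|. \]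
   Context: $[N]=\{1,\dots,N\}$. $\mathcal{B}_N$ is the space of all functions $f\colon\{-1,1\}^N\to\mathbb{R}$ with the sup norm; each has the Fourier–Walsh expansion $f(x)=\sum_{S\subset[N]}\widehat f(S)x^S$ with $x^S=\prod_{n\in S}x_n$ and $\widehat f(S)=2^{-N}\sum_{x}f(x)x^S$. $\mathcal{B}_N^{\le d}$ consists of those $f$ with $\widehat f(S)=0$ for $|S|>d$, and $\mathcal{B}_N^{=d}$ of those with $\widehat f(S)=0$ for $|S|\neq d$. $M_\xi f=(\xi_S\widehat f(S))_S$ over the relevant index set. $\log$ is natural. *)

From HB Require Import structures.
From mathcomp Require Import all_boot all_order all_algebra.
From mathcomp Require Import all_classical all_reals all_analysis.
Set Implicit Arguments. Unset Strict Implicit. Unset Printing Implicit Defensive.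
Import Order.TTheory GRing.Theory Num.Theory.
Local Open Scope ring_scope.
Local Open Scope classical_set_scope.

Section Walsh.
Variable R : realType.
Variable N : nat.

(* points of the cube {-1,1}^N, coded by booleans: true |-> 1, false |-> -1 *)
Definition cube := {ffun 'I_N -> bool}.
Definition sgnb (b : bool) : R := if b then 1 else -1.

Definition walsh (S : {set 'I_N}) (x : cube) : R := \prod_(n in S) sgnb (x n).

Definition fhat (f : cube -> R) (S : {set 'I_N}) : R :=
  (2%:R ^- N) * \sum_(x : cube) f x * walsh S x.

Definition supnorm (f : cube -> R) : R := \big[Num.max/0]_(x : cube) `|f x|.

Definition spec_in (A : pred {set 'I_N}) (f : cube -> R) : Prop :=
  forall S, ~~ A S -> fhat f S = 0.

Definition lpnorm (p : R) (A : pred {set 'I_N}) (g : {set 'I_N} -> R) : R :=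
  (\sum_(S | A S) `|g S| `^ p) `^ p^-1.

(* operator norm of M_xi : (B_N^A, sup norm) -> l_p(A), f |-> (xi_S \hat f(S))_{S in A} *)
Definition mult_opnorm (p : R) (A : pred {set 'I_N}) (xi : {set 'I_N} -> R) : R :=
  sup [set y | exists f : cube -> R,
        [/\ spec_in A f, supnorm f <= 1 & y = lpnorm p A (fun S => xi S * fhat f S)]].

Definition rnorm (p : R) (A : pred {set 'I_N}) (xi : {set 'I_N} -> R) : R :=
  if p == 2 then \big[Num.max/0]_(S | A S) `|xi S|
  else let r := (p^-1 - 2^-1)^-1 in (\sum_(S | A S) `|xi S| `^ r) `^ r^-1.

End Walsh.

From HB Require Import structures.
From mathcomp Require Import all_boot all_order all_algebra.
From mathcomp Require Import all_classical all_reals all_analysis.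
From mathcomp Require Import ring lra.
Import Order.TTheory GRing.Theory Num.Theory.
Local Open Scope ring_scope.

(* The three estimates of theorem6p7 all follow from one inequality, valid for
   every family A of index sets and every 1 <= p <= 2:
     (★)  rnorm p A xi <= 3 sqrt(1 + N ln 2) * ||M_xi : B_N^A -> l_p(A)||.
   Indeed 2 sqrt2 e^2 Q >= 3 as soon as Q >= 1/2, and ln 2 <= ln(1 + 20 d) for
   d >= 1; when d = 0 the family A is {∅} and rnorm is just |xi ∅|, which is
   bounded by the operator norm directly.
   (★) is proved by testing M_xi on a Salem-Zygmund random-sign polynomial:
   - Walsh orthogonality identifies the Fourier coefficients of a Walsh
     polynomial with its coefficients; testing on a single character gives
     |xi_S| <= ||M_xi||, which is (★) for p = 2 (r = oo).
   - For c with sum_A c_S^2 = 1, averaging exp(±l sum_S e_S c_S x^S) over all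
     sign patterns e, with e^t + e^-t <= 2 e^(2t^2), yields a pattern whose
     polynomial has sup norm at most 3 sqrt(1 + N ln 2).
   - For p < 2 the choice c_S = (|xi_S|^r / W)^(1/2), W = sum_A |xi_S|^r, makes
     the l_p norm of (xi_S c_S) equal to W^(1/r) = rnorm p A xi, giving (★). *)

Section RealInequalities.
Context {R : realType}.

Lemma expR_le_quad (s : R) : `|s| <= 2^-1 -> expR s <= 1 + s + 2 * s ^+ 2.
Proof.
move=> hs; have /andP[h1 h2] : - 2^-1 <= s <= 2^-1 by rewrite -ler_norml.
have pos : 0 < 1 - s by lra.
have e1 : 1 - s <= expR (- s) by have := expR_ge1Dx (- s); lra.
have -> : expR s = (expR (- s))^-1 by rewrite expRN invrK.
apply: le_trans (_ : (1 - s)^-1 <= _); first by rewrite lef_pV2 // posrE expR_gt0.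
by rewrite -[(1 - s)^-1]mul1r ler_pdivrMr //; nra.
Qed.

Lemma expR_add_opp_le (t : R) : expR t + expR (- t) <= 2 * expR (2 * t ^+ 2).
Proof.
have e := expR_ge1Dx (2 * t ^+ 2).
have [ht|ht] := leP `|t| 2^-1.
  have h1 := expR_le_quad t ht.
  have := @expR_le_quad (- t); rewrite normrN sqrrN => /(_ ht) h2; lra.
have ha : `|t| <= 2 * t ^+ 2 by rewrite -real_normK ?num_real //; nra.
have e1 : expR t <= expR (2 * t ^+ 2).
  by rewrite ler_expR; apply: le_trans ha; exact: ler_norm.
have e2 : expR (- t) <= expR (2 * t ^+ 2).
  by rewrite ler_expR; apply: le_trans ha; rewrite -normrN; exact: ler_norm.
lra.
Qed.

Lemma expR_norm_le (l y : R) : 0 <= l -> expR (l * `|y|) <= expR (l * y) + expR (- l * y).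
Proof.
move=> l0; have [y0|y0] := lerP 0 y.
  by rewrite ger0_norm // lerDl expR_ge0.
by rewrite ltr0_norm // mulrN -mulNr lerDr expR_ge0.
Qed.

Lemma exists_le_average (T : finType) (G : T -> R) (K : R) (t0 : T) :
  \sum_(t : T) G t <= #|T|%:R * K -> exists t, G t <= K.
Proof.
move=> hsum; apply/not_existsP => hgt.
have : \sum_(t : T) K < \sum_(t : T) G t.
  apply: ltr_sum; first by apply/hasP; exists t0; rewrite ?mem_index_enum.
  by move=> t _; rewrite ltNge; apply/negP => h; apply: (hgt t).
by rewrite sumr_const -mulr_natl => /lt_le_trans/(_ hsum); rewrite ltxx.
Qed.

Lemma powRV (y q : R) : 0 <= y -> y^-1 `^ q = (y `^ q)^-1.
Proof. by move=> y0; rewrite -powR_inv1 // -powRrM mulN1r powRN. Qed.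

End RealInequalities.

Section WalshAnalysis.
Variable R : realType.
Variable N : nat.
Implicit Types (S T : {set 'I_N}) (x : cube N) (p : R) (A : pred {set 'I_N})
  (xi : {set 'I_N} -> R).

Lemma sgnb_sq b : sgnb R b * sgnb R b = 1.
Proof. by case: b; rewrite /sgnb ?mulr1 ?mulrNN ?mulr1. Qed.

Lemma normr_sgnb b : `|sgnb R b| = 1.
Proof. by case: b; rewrite /sgnb ?normrN normr1. Qed.

(* x^S as a product over all coordinates, the form suited to distributivity. *)
Lemma walshE S x : walsh R S x = \prod_(n : 'I_N) (if n \in S then sgnb R (x n) else 1).
Proof. by rewrite /walsh big_mkcond. Qed.

Lemma walsh_sq S x : walsh R S x * walsh R S x = 1.
Proof.
rewrite walshE -big_split /=; apply: big1 => n _.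
by case: ifP => _; rewrite ?sgnb_sq ?mulr1.
Qed.

Lemma normr_walsh S x : `|walsh R S x| = 1.
Proof.
rewrite walshE normr_prod; apply: big1 => n _.
by case: ifP => _; rewrite ?normr1 ?normr_sgnb.
Qed.

Lemma card_cube : #|{: cube N}| = (2 ^ N)%N.
Proof. by rewrite card_ffun card_bool card_ord. Qed.

(* Orthogonality of the Walsh characters: the sum over the cube factorises
   coordinatewise, and a coordinate in T (+) S contributes a factor 0. *)
Lemma walsh_orth S T :
  \sum_(x : cube N) walsh R T x * walsh R S x = if T == S then 2%:R ^+ N else 0.
Proof.
under eq_bigr => x _ do rewrite !walshE -big_split /=.
rewrite -(bigA_distr_bigA (fun n b =>
  (if n \in T then sgnb R b else 1) * (if n \in S then sgnb R b else 1))) /=.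
case: eqP => [<-|/eqP TS].
  rewrite (eq_bigr (fun _ => 2%:R)) ?prodr_const ?card_ord // => n _.
  by rewrite big_bool /=; case: ifP => _; rewrite ?mulrNN mulr1.
have [n Hn] : exists n, (n \in T) != (n \in S).
  apply/existsP; apply: contraNT TS => /existsPn H; apply/eqP/setP => n.
  by have := H n; rewrite negbK => /eqP.
rewrite (bigD1 n) //= big_bool /=.
move: Hn; case: (n \in T); case: (n \in S) => //= _;
  by rewrite /sgnb ?mulr1 ?mul1r ?addrN ?addNr mul0r.
Qed.

Lemma fhat_walsh_poly (a : {set 'I_N} -> R) S :
  fhat (fun x => \sum_T a T * walsh R T x) S = a S.
Proof.
rewrite /fhat; under eq_bigr => x _ do rewrite mulr_suml.
rewrite exchange_big /= (eq_bigr (fun T => a T * (if T == S then 2%:R ^+ N else 0))).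
  rewrite (bigD1 S) //= eqxx big1 ?addr0; last by move=> T /negbTE ->; rewrite mulr0.
  by rewrite mulrCA mulVf ?mulr1 // expf_neq0 // pnatr_eq0.
by move=> T _; rewrite -walsh_orth big_distrr; apply: eq_bigr => x _; rewrite -mulrA.
Qed.

Lemma supnorm_ge (f : cube N -> R) x : `|f x| <= supnorm f.
Proof. exact: le_bigmax. Qed.

Lemma supnorm_le1 (f : cube N -> R) : (forall x, `|f x| <= 1) -> supnorm f <= 1.
Proof. by move=> H; apply: bigmax_le. Qed.

Lemma normr_fhat_le1 (f : cube N -> R) S : supnorm f <= 1 -> `|fhat f S| <= 1.
Proof.
move=> Hf; rewrite /fhat normrM normfV normrX ger0_norm ?ler0n //.
rewrite ler_pdivrMl ?exprn_gt0 ?ltr0n // mulr1.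
apply: le_trans (ler_norm_sum _ _ _) _.
apply: (@le_trans _ _ (\sum_(x : cube N) (1 : R))).
  apply: ler_sum => x _; rewrite normrM normr_walsh mulr1.
  exact: le_trans (supnorm_ge f x) Hf.
by rewrite sumr_const card_cube natrX.
Qed.

Lemma lpnorm_ge0 p A (g : {set 'I_N} -> R) : 0 <= lpnorm p A g.
Proof. exact: powR_ge0. Qed.

Lemma lpnorm_mono p A (g h : {set 'I_N} -> R) : 0 < p ->
  (forall S, A S -> `|g S| <= `|h S|) -> lpnorm p A g <= lpnorm p A h.
Proof.
move=> p0 H; rewrite /lpnorm; apply: ge0_ler_powR.
- by rewrite invr_ge0 ltW.
- by rewrite nnegrE sumr_ge0 // => S _; exact: powR_ge0.
- by rewrite nnegrE sumr_ge0 // => S _; exact: powR_ge0.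
apply: ler_sum => S AS; apply: ge0_ler_powR; rewrite ?nnegrE //; [exact: ltW | exact: H].
Qed.

Lemma lpnorm_scale p A (g h : {set 'I_N} -> R) (B : R) : 0 < p -> 0 < B ->
  (forall S, A S -> `|h S| = `|g S| / B) -> lpnorm p A h = lpnorm p A g / B.
Proof.
move=> p0 B0 H; rewrite /lpnorm.
rewrite (eq_bigr (fun S => `|g S| `^ p * (B `^ p)^-1)); last first.
  move=> S AS; rewrite H // (@powRM _ `|g S| B^-1 p) //; last by rewrite invr_ge0 ltW.
  by rewrite powRV // ltW.
have s0 : 0 <= \sum_(S | A S) `|g S| `^ p by apply: sumr_ge0 => S _; exact: powR_ge0.
rewrite -mulr_suml (@powRM _ _ (B `^ p)^-1 p^-1) //; last by rewrite invr_ge0 powR_ge0.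
by rewrite powRV ?powR_ge0 // -powRrM mulfV ?gt_eqF // powRr1 // ltW.
Qed.

(* Every test function of the unit ball of B_N^A bounds the operator norm:
   the supremum exists since |xi_S fhat f S| <= |xi_S| bounds the whole set. *)
Lemma opnorm_ge_test p A xi (f : cube N -> R) : 0 < p -> spec_in A f -> supnorm f <= 1 ->
  lpnorm p A (fun S => xi S * fhat f S) <= mult_opnorm p A xi.
Proof.
move=> p0 sf nf; apply: sup_upper_bound; last by exists f.
split; first by exists (lpnorm p A (fun S => xi S * fhat f S)), f.
exists (lpnorm p A xi) => y [g [_ ng ->]].
apply: lpnorm_mono => // S _; rewrite normrM.
by rewrite -[leRHS]mulr1 ler_wpM2l // normr_fhat_le1.
Qed.

(* The zero function shows that the operator norm is nonnegative. *)
Lemma opnorm_ge0 p A xi : 0 < p -> 0 <= mult_opnorm p A xi.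
Proof.
move=> p0; apply: le_trans (lpnorm_ge0 p A (fun S => xi S * fhat (fun _ => 0) S)) _.
apply: opnorm_ge_test => //.
  by move=> S _; rewrite /fhat big1 ?mulr0 // => x _; rewrite mul0r.
by apply: supnorm_le1 => x; rewrite normr0.
Qed.

(* Testing M_xi on the single character x^S0 gives |xi_S0| <= ||M_xi||. *)
Lemma opnorm_ge_coef p A xi S0 : 0 < p -> A S0 -> `|xi S0| <= mult_opnorm p A xi.
Proof.
move=> p0 AS0; pose a T : R := (T == S0)%:R.
have fa x : \sum_T a T * walsh R T x = walsh R S0 x.
  rewrite (bigD1 S0) //= big1 ?addr0 /a ?eqxx ?mul1r // => T /negbTE ->.
  by rewrite mul0r.
apply: le_trans (@opnorm_ge_test p A xi (fun x => \sum_T a T * walsh R T x) p0 _ _).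
- rewrite /lpnorm (bigD1 S0) //= big1 ?addr0; last first.
    move=> T /andP[_ /negbTE TS]; rewrite fhat_walsh_poly /a TS mulr0 normr0 powR0 //.
    by rewrite gt_eqF.
  by rewrite fhat_walsh_poly /a eqxx mulr1 -powRrM mulfV ?gt_eqF // powRr1.
- move=> S nAS; rewrite fhat_walsh_poly /a; case: eqP => [ES|//].
  by rewrite ES AS0 in nAS.
- by apply: supnorm_le1 => x; rewrite fa normr_walsh.
Qed.

Definition signs := {ffun {set 'I_N} -> bool}.

Definition sign_coef A (c : {set 'I_N} -> R) (e : signs) S : R :=
  if A S then sgnb R (e S) * c S else 0.

Definition sign_poly A (c : {set 'I_N} -> R) (e : signs) x : R :=
  \sum_S sign_coef A c e S * walsh R S x.

(* Laplace transform of the random-sign polynomial at a fixed point x: the sum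
   over sign patterns factorises over S, each factor being a cosh. *)
Lemma sum_signs_expR A c (l : R) x :
  \sum_(e : signs) expR (l * sign_poly A c e x)
  <= 2%:R ^+ #|{: {set 'I_N}}| * expR (2 * l ^+ 2 * \sum_(S | A S) c S ^+ 2).
Proof.
pose b S := l * (if A S then c S else 0) * walsh R S x.
have E e : expR (l * sign_poly A c e x) = \prod_S expR (sgnb R (e S) * b S).
  rewrite /sign_poly mulr_sumr expR_sum; apply: eq_bigr => S _.
  by rewrite /sign_coef /b; case: ifP => _; rewrite ?mulr0 ?mul0r ?mulr0 // !mulrA [l * _]mulrC.
under eq_bigr => e _ do rewrite E.
rewrite -(bigA_distr_bigA (fun S s => expR (sgnb R s * b S))) /=.
apply: le_trans (_ : \prod_S (2 * expR (2 * b S ^+ 2)) <= _).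
  apply: ler_prod => S _; rewrite big_bool /= /sgnb !mul1r mulN1r.
  by rewrite addr_ge0 ?expR_ge0 // expR_add_opp_le.
rewrite big_split /= prodr_const -expR_sum.
apply: ler_wpM2l; first by rewrite exprn_ge0.
rewrite ler_expR mulr_sumr [leRHS]big_mkcond /=; apply: ler_sum => S _.
rewrite /b; case: ifP => _; last by rewrite mulr0 mul0r expr0n /= mulr0.
have w2 := walsh_sq S x.
rewrite !exprMn -[walsh R S x ^+ 2]/(walsh R S x * walsh R S x) w2 mulr1.
by rewrite le_eqVlt; apply/predU1P; left; ring.
Qed.

Lemma sum_signs_cube_expR A c (l : R) : \sum_(S | A S) c S ^+ 2 = 1 ->
  \sum_(e : signs) \sum_(x : cube N)
     (expR (l * sign_poly A c e x) + expR (- l * sign_poly A c e x))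
  <= #|{: signs}|%:R * (2%:R ^+ N * (2 * expR (2 * l ^+ 2))).
Proof.
move=> hc; rewrite exchange_big /=.
under eq_bigr => x _ do rewrite big_split /=.
apply: le_trans (_ : \sum_(x : cube N) (2%:R ^+ #|{: {set 'I_N}}| * expR (2 * l ^+ 2)
                          + 2%:R ^+ #|{: {set 'I_N}}| * expR (2 * l ^+ 2)) <= _).
  apply: ler_sum => x _; apply: lerD.
    by have := sum_signs_expR A c l x; rewrite hc mulr1.
  by have := sum_signs_expR A c (- l) x; rewrite sqrrN hc mulr1.
rewrite sumr_const card_cube -[_ *+ (2 ^ N)]mulr_natl card_ffun card_bool !natrX.
set a := 2 ^+ #|{: {set 'I_N}}|; set b := 2 ^+ N; set E := expR _; clearbody a b E.
by rewrite le_eqVlt; apply/predU1P; left; ring.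
Qed.

(* Salem-Zygmund: some sign pattern is below the average, and for it
   exp(l |P(x)|) <= 2^(N+1) exp(2 l^2) <= exp(3 l^2) at every x; with
   l = sqrt(1 + N ln 2) this gives sup |P| <= 3 sqrt(1 + N ln 2). *)
Lemma good_sign_pattern A c : \sum_(S | A S) c S ^+ 2 = 1 ->
  exists e, forall x, `|sign_poly A c e x| <= 3 * Num.sqrt (1 + N%:R * ln 2).
Proof.
move=> hc; set L := 1 + N%:R * ln 2; set l := Num.sqrt L.
have ln2 : 0 <= ln (2 : R) by rewrite ln_ge0 // ler1n.
have L1 : 1 <= L by rewrite /L lerDl mulr_ge0.
have l0 : 0 < l by rewrite sqrtr_gt0; lra.
have l2 : l ^+ 2 = L by rewrite sqr_sqrtr //; lra.
set K := 2%:R ^+ N * (2 * expR (2 * l ^+ 2)).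
have [e he] := @exists_le_average _ signs _ _ [ffun=> true] (sum_signs_cube_expR A c l hc).
have K_le : K <= expR (3 * L).
  have -> : 3 * L = N%:R * ln 2 + 1 + 2 * l ^+ 2 by rewrite l2 /L; ring.
  rewrite !expRD /K mulrA ler_wpM2r ?expR_ge0 // expRM_natl lnK ?posrE //.
  by rewrite ler_wpM2l ?exprn_ge0 // (le_trans _ (expR_ge1Dx 1)) //; lra.
exists e => x.
have : expR (l * `|sign_poly A c e x|) <= expR (3 * L).
  apply: le_trans (expR_norm_le l (sign_poly A c e x) (ltW l0)) _.
  apply: le_trans (le_trans he K_le).
  by rewrite (bigD1 x) //= lerDl sumr_ge0.
rewrite ler_expR => h; rewrite -(ler_pM2l l0); apply: le_trans h _.
by rewrite -l2 le_eqVlt; apply/predU1P; left; ring.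
Qed.

Lemma opnorm_ge_sign_poly p A xi c e (B : R) : 0 < p -> 0 < B ->
  (forall x, `|sign_poly A c e x| <= B) ->
  lpnorm p A (fun S => xi S * c S) / B <= mult_opnorm p A xi.
Proof.
move=> p0 B0 hB; pose f x := \sum_S (sign_coef A c e S / B) * walsh R S x.
have fE x : f x = sign_poly A c e x / B.
  by rewrite /f /sign_poly mulr_suml; apply: eq_bigr => S _; rewrite mulrAC.
have spec_f : spec_in A f.
  by move=> S nAS; rewrite fhat_walsh_poly /sign_coef (negbTE nAS) mul0r.
have norm_f : supnorm f <= 1.
  apply: supnorm_le1 => x; rewrite fE normrM normfV (gtr0_norm B0).
  by rewrite ler_pdivrMr // mul1r.
rewrite -(@lpnorm_scale p A _ (fun S => xi S * fhat f S)) //.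
  exact: opnorm_ge_test.
move=> S AS; rewrite fhat_walsh_poly /sign_coef AS !normrM normfV (gtr0_norm B0).
by rewrite normr_sgnb mul1r mulrA.
Qed.

(* Extremal coefficients in Hölder's inequality between l_r and l_2:
   c_S = (|xi_S|^r / W)^(1/2) with W = sum_A |xi_S|^r. *)
Definition dual_weight (r W : R) xi S : R := (`|xi S| `^ r / W) `^ 2^-1.

Lemma dual_weight_sq_sum r A xi (W := \sum_(S | A S) `|xi S| `^ r) :
  0 < W -> \sum_(S | A S) dual_weight r W xi S ^+ 2 = 1.
Proof.
move=> W0; rewrite (eq_bigr (fun S => `|xi S| `^ r / W)); last first.
  by move=> S _; rewrite /dual_weight powR12_sqrt ?sqr_sqrtr // divr_ge0 ?powR_ge0 ?ltW.
by rewrite -mulr_suml mulfV ?gt_eqF.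
Qed.

Lemma lpnorm_dual_weight p A xi (q := p^-1 - 2^-1) (r := q^-1)
    (W := \sum_(S | A S) `|xi S| `^ r) :
  0 < p -> p < 2 -> 0 < W -> lpnorm p A (fun S => xi S * dual_weight r W xi S) = W `^ q.
Proof.
move=> p0 p2 W0.
have r0 : 0 < r by rewrite invr_gt0 subr_gt0 ltf_pV2 ?posrE.
have hr : p + r * (2^-1 * p) = r.
  rewrite /r /q; field; rewrite mulN1r !gt_eqF ?subr_gt0 //.
rewrite /lpnorm (eq_bigr (fun S => `|xi S| `^ r * (W `^ (2^-1 * p))^-1)); last first.
  move=> S _; rewrite /dual_weight normrM (ger0_norm (powR_ge0 _ _)).
  rewrite (powRM p) ?powR_ge0 // -powRrM (powRM (2^-1 * p)) ?powR_ge0 ?invr_ge0 ?ltW //.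
  rewrite powRV ?ltW // -powRrM mulrA -powRD; first by congr (_ `^ _ / _); exact: hr.
  by apply/implyP => /eqP h; move: r0; rewrite (etrans (esym hr) h) ltxx.
have p_half : 2^-1 * p < 1 by lra.
rewrite -mulr_suml -/W -[W in W * _]powRr1 ?ltW // -powRB ?gt_eqF ?implybT ?subr_gt0 //.
by rewrite -powRrM; congr (_ `^ _); rewrite /q; field; rewrite gt_eqF.
Qed.

Lemma sqrt_log_ge1 (a : R) : 1 <= a -> 1 <= Num.sqrt (1 + N%:R * ln a).
Proof.
move=> a1; have log_ge0 : 0 <= N%:R * ln a by rewrite mulr_ge0 ?ln_ge0.
by rewrite -[X in X <= _]sqrtr1 ler_sqrt; lra.
Qed.

(* (★) for p < 2: test M_xi on the Salem-Zygmund polynomial built from the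
   dual weights of xi. *)
Lemma rnorm_le_opnorm_lt2 p A xi : 1 <= p -> p < 2 ->
  rnorm p A xi <= 3 * Num.sqrt (1 + N%:R * ln 2) * mult_opnorm p A xi.
Proof.
move=> p1 p2; have p0 : 0 < p by lra.
have sqrt_ge1 : 1 <= Num.sqrt (1 + N%:R * ln 2 : R) by rewrite sqrt_log_ge1 ?ler1n.
have B0 : 0 < 3 * Num.sqrt (1 + N%:R * ln 2 : R).
  by rewrite mulr_gt0 // (lt_le_trans _ sqrt_ge1).
rewrite /rnorm lt_eqF //= invrK.
set W := \sum_(S | A S) _.
have [W_eq0|W_neq0] := eqVneq W 0.
  rewrite W_eq0 powR0; first by rewrite mulr_ge0 ?opnorm_ge0 ?(ltW B0).
  by rewrite gt_eqF // subr_gt0 ltf_pV2 ?posrE.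
have W_gt0 : 0 < W by rewrite lt_def W_neq0 sumr_ge0 // => S _; exact: powR_ge0.
have [e he] := good_sign_pattern A _ (dual_weight_sq_sum _ A xi W_gt0).
have := opnorm_ge_sign_poly p A xi _ _ _ p0 B0 he.
by rewrite lpnorm_dual_weight // ler_pdivrMr // mulrC.
Qed.

Lemma rnorm_le_opnorm_2 A xi : rnorm 2 A xi <= mult_opnorm 2 A xi.
Proof.
rewrite /rnorm eqxx; apply: bigmax_le; first by rewrite opnorm_ge0.
by move=> S AS; rewrite opnorm_ge_coef.
Qed.

Lemma rnorm_le_opnorm p A xi : 1 <= p <= 2 ->
  rnorm p A xi <= 3 * Num.sqrt (1 + N%:R * ln 2) * mult_opnorm p A xi.
Proof.
move=> /andP[p1 p2]; have [->|p_neq2] := eqVneq p 2.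
  apply: le_trans (rnorm_le_opnorm_2 A xi) _.
  rewrite -[leLHS]mul1r ler_wpM2r ?opnorm_ge0 //.
  have : 1 <= Num.sqrt (1 + N%:R * ln 2 : R) by rewrite sqrt_log_ge1 ?ler1n.
  lra.
by rewrite rnorm_le_opnorm_lt2 // lt_neqAle p_neq2.
Qed.

Lemma rnorm_le_opnorm_single p A xi S0 : 1 <= p <= 2 -> (forall S, A S = (S == S0)) ->
  rnorm p A xi <= mult_opnorm p A xi.
Proof.
move=> /andP[p1 p2] AE; have p0 : 0 < p by lra.
have [->|p_neq2] := eqVneq p 2; first exact: rnorm_le_opnorm_2.
have q0 : 0 < p^-1 - 2^-1 by rewrite subr_gt0 ltf_pV2 ?posrE // lt_neqAle p_neq2.
rewrite /rnorm (negbTE p_neq2) /= (big_pred1 S0) => [|S]; last by rewrite AE.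
rewrite -powRrM mulfV ?gt_eqF ?invr_gt0 // powRr1 //.
by rewrite opnorm_ge_coef // AE.
Qed.

(* (★) with the degree-dependent logarithm ln(1 + 20 d): for d >= 1 it is
   weaker than (★), and for d = 0 the family A reduces to {∅}. *)
Lemma rnorm_le_opnorm_deg p A xi (d : nat) : 1 <= p <= 2 ->
  ((d = 0)%N -> forall S, A S = (S == finset.set0)) ->
  rnorm p A xi <= 3 * Num.sqrt (1 + N%:R * ln (1 + 20 * d%:R)) * mult_opnorm p A xi.
Proof.
move=> hp hA; have p0 : 0 < p by case/andP: hp => ? ?; lra.
have log_ge0 : 0 <= ln (1 + 20 * d%:R : R) by rewrite ln_ge0 // lerDl mulr_ge0.
case: d hA log_ge0 => [|d] hA log_ge0.
  apply: le_trans (rnorm_le_opnorm_single _ _ xi _ hp (hA erefl)) _.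
  rewrite -[leLHS]mul1r ler_wpM2r ?opnorm_ge0 //.
  have : 1 <= Num.sqrt (1 + N%:R * ln (1 + 20 * 0%:R) : R).
    by rewrite sqrt_log_ge1 // mulr0 addr0.
  lra.
apply: le_trans (rnorm_le_opnorm _ A xi hp) _.
have d_ge1 : 1 <= d.+1%:R :> R by rewrite ler1n.
rewrite ler_wpM2r ?opnorm_ge0 // ler_wpM2l // ler_sqrt ?lerD2l ?ler_wpM2l //.
  by rewrite ler_ln ?posrE; lra.
by rewrite addr_ge0 ?mulr_ge0.
Qed.
End WalshAnalysis.

Lemma inv_mul_le_of_le {R : realType} (X op s K : R) : 0 <= op -> 1 <= s -> 3 <= K ->
  X <= 3 * s * op -> s^-1 * X <= K * op.
Proof.
move=> op0 s1 K3 hX; have s0 : 0 < s by lra.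
rewrite mulrC ler_pdivrMr //; apply: le_trans hX _.
by rewrite mulrAC ler_wpM2r //; [lra | rewrite ler_wpM2r].
Qed.

(* The constant of the theorem: 2 sqrt2 e^2 Q >= 6 Q >= 3 when Q >= 1/2. *)
Lemma three_le_const {R : realType} (Q : R) : 2^-1 <= Q -> 3 <= 2 * Num.sqrt 2 * expR 2 * Q.
Proof.
move=> hQ.
have sqrt2_ge1 : 1 <= Num.sqrt (2 : R) by rewrite -[X in X <= _]sqrtr1 ler_sqrt; lra.
have e2_ge3 : 3 <= expR (2 : R) by have := expR_ge1Dx (2 : R); lra.
have : 6 <= 2 * Num.sqrt 2 * expR (2 : R) by nra.
nra.
Qed.

Theorem theorem6p7 (R : realType) (p : R) (N d : nat) :
  1 <= p <= 2 -> (d <= N)%N ->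
  [/\ (forall xi : {set 'I_N} -> R,
         (Num.sqrt (1 + N%:R * ln 2))^-1 * rnorm p predT xi
           <= 2 * Num.sqrt 2 * expR 2 * mult_opnorm p predT xi),
      (forall xi : {set 'I_N} -> R,
         (Num.sqrt (1 + N%:R * ln (1 + 20 * d%:R)))^-1
           * rnorm p (fun S : {set 'I_N} => (#|S| <= d)%N) xi
           <= 2 * Num.sqrt 2 * expR 2 * (1 + Num.sqrt 2) ^+ d
              * mult_opnorm p (fun S : {set 'I_N} => (#|S| <= d)%N) xi)
    & (forall xi : {set 'I_N} -> R,
         (Num.sqrt (1 + N%:R * ln (1 + 20 * d%:R)))^-1
           * rnorm p (fun S : {set 'I_N} => #|S| == d) xi
           <= 2 * Num.sqrt 2 * expR 2 * (2 ^+ d / 2)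
              * mult_opnorm p (fun S : {set 'I_N} => #|S| == d) xi)].
Proof.
move=> hp _; have p0 : 0 < p by case/andP: hp => ? ?; lra.
have sqrt_ge1 (a : R) : 1 <= a -> 1 <= Num.sqrt (1 + N%:R * ln a) := @sqrt_log_ge1 R N a.
have d_ge1 : 1 <= 1 + 20 * d%:R :> R by rewrite lerDl mulr_ge0.
split=> xi; apply: inv_mul_le_of_le; rewrite ?opnorm_ge0 ?sqrt_ge1 ?ler1n //.
- by have := @three_le_const R 1; rewrite mulr1; apply; lra.
- exact: rnorm_le_opnorm.
- apply: three_le_const; have := exprn_ege1 d (_ : 1 <= 1 + Num.sqrt 2 :> R).
  by have := sqrtr_ge0 (2 : R); lra.
- by apply: rnorm_le_opnorm_deg => // d0 S; rewrite d0 leqn0 cards_eq0.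
- by apply: three_le_const; have := exprn_ege1 d (_ : 1 <= 2 :> R); lra.
- by apply: rnorm_le_opnorm_deg => // d0 S; rewrite d0 cards_eq0.
Qed.
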